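(* Let $C_5$ be a spherical pentagon on $\mathbb{S}^2$ with vertices $\mathbf{p}_1,\dots,\mathbf{p}_5$ in cyclic order, all of whose five sides have length $\pi/3$, triangulated by the diagonals $\mathbf{p}_1\mathbf{p}_3$ and $\mathbf{p}_1\mathbf{p}_4$, both of length greater than $\pi/3$, into the triangles $\mathbf{p}_1\mathbf{p}_2\mathbf{p}_3$, $\mathbf{p}_1\mathbf{p}_3\mathbf{p}_4$, $\mathbf{p}_1\mathbf{p}_4\mathbf{p}_5$. Let $\alpha$ and $\beta$ be the angles at $\mathbf{p}_2$ in $\mathbf{p}_1\mathbf{p}_2\mathbf{p}_3$ and at $\mathbf{p}_5$ in $\mathbf{p}_1\mathbf{p}_4\mathbf{p}_5$, respectively; let $\alpha'$ and $\beta'$ be the angles at $\mathbf{p}_1$ in $\mathbf{p}_1\mathbf{p}_2\mathbf{p}_3$ and in $\mathbf{p}_1\mathbf{p}_4\mathbf{p}_5$, respectively; and let $\omega$ be the angle at $\mathbf{p}_1$ in $\mathbf{p}_1\mathbf{p}_3\mathbf{p}_4$ (opposite its side $\mathbf{p}_3\mathbf{p}_4$ of length $\pi/3$). If $\alpha,\beta\in\{2\pi-k\arccos(1/3): k=3,4\}$, then $\alpha'+\beta'+\omega\notin\{2\pi-k\arccos(1/3): k=1,2,3,4\}$.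
   Context: $\mathbb{S}^2$ is the unit sphere in $\mathbb{E}^3$ with spherical (geodesic) distance; sides are great-circle arcs. $\arccos(1/3)$ is the angle of a spherical equilateral triangle of side length $\pi/3$. *)

From Stdlib Require Import Reals Lra.
Open Scope R_scope.

Record pt := Pt { px : R; py : R; pz : R }.

Definition dot (a b : pt) : R := px a * px b + py a * py b + pz a * pz b.
Definition vadd (a b : pt) : pt := Pt (px a + px b) (py a + py b) (pz a + pz b).
Definition vscale (s : R) (a : pt) : pt := Pt (s * px a) (s * py a) (s * pz a).
Definition vsub (a b : pt) : pt := vadd a (vscale (-1) b).
Definition vnorm (a : pt) : R := sqrt (dot a a).

Definition on_sphere (a : pt) : Prop := dot a a = 1.

Definition sdist (a b : pt) : R := acos (dot a b).

(* angle at vertex v of the spherical triangle a v b: the angle between the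
   tangent vectors at v of the great-circle arcs v->a and v->b *)
Definition tangent_at (v a : pt) : pt := vsub a (vscale (dot a v) v).
Definition sangle (a v b : pt) : R :=
  let ta := tangent_at v a in
  let tb := tangent_at v b in
  acos (dot ta tb / (vnorm ta * vnorm tb)).

(* x lies on the (minor) great-circle arc from a to b *)
Definition on_arc (a b x : pt) : Prop :=
  on_sphere x /\ exists s t : R, 0 <= s /\ 0 <= t /\ x = vadd (vscale s a) (vscale t b).

Definition simple_pentagon (p1 p2 p3 p4 p5 : pt) : Prop :=
  (forall x, on_arc p1 p2 x -> on_arc p2 p3 x -> x = p2) /\
  (forall x, on_arc p2 p3 x -> on_arc p3 p4 x -> x = p3) /\
  (forall x, on_arc p3 p4 x -> on_arc p4 p5 x -> x = p4) /\
  (forall x, on_arc p4 p5 x -> on_arc p5 p1 x -> x = p5) /\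
  (forall x, on_arc p5 p1 x -> on_arc p1 p2 x -> x = p1) /\
  (forall x, on_arc p1 p2 x -> ~ on_arc p3 p4 x) /\
  (forall x, on_arc p1 p2 x -> ~ on_arc p4 p5 x) /\
  (forall x, on_arc p2 p3 x -> ~ on_arc p4 p5 x) /\
  (forall x, on_arc p2 p3 x -> ~ on_arc p5 p1 x) /\
  (forall x, on_arc p3 p4 x -> ~ on_arc p5 p1 x).

Definition on_boundary (p1 p2 p3 p4 p5 x : pt) : Prop :=
  on_arc p1 p2 x \/ on_arc p2 p3 x \/ on_arc p3 p4 x \/ on_arc p4 p5 x \/ on_arc p5 p1 x.

Definition proper_diagonals (p1 p2 p3 p4 p5 : pt) : Prop :=
  (forall x, on_arc p1 p3 x -> on_boundary p1 p2 p3 p4 p5 x -> x = p1 \/ x = p3) /\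
  (forall x, on_arc p1 p4 x -> on_boundary p1 p2 p3 p4 p5 x -> x = p1 \/ x = p4) /\
  (forall x, on_arc p1 p3 x -> on_arc p1 p4 x -> x = p1).

Definition special_angle (k : nat) : R := 2 * PI - INR k * acos (1 / 3).

From Stdlib Require Import Reals Lra Lia Psatz.
Open Scope R_scope.

(* By the spherical law of cosines, the angle at the apex p2 of the isosceles
   triangle p1 p2 p3 (legs pi/3, so of cosine 1/2) determines its base:
   cos |p1 p3| = 1/4 + 3/4 cos alpha.  With theta = arccos (1/3) we have
   cos (2 pi - 3 theta) = -23/27 and cos (2 pi - 4 theta) = 17/81, so
   cos |p1 p3| is -7/18 or 11/27, and likewise for cos |p1 p4|.  The law of
   cosines then gives alpha', beta' and omega as explicit arccosines of these
   numbers, and Taylor enclosures of cos place alpha' + beta' + omega strictly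
   between consecutive values 2 pi - k theta. *)

Definition cos_taylor6 (a : R) : R := 1 - a^2/2 + a^4/24 - a^6/720.
Definition cos_taylor8 (a : R) : R := cos_taylor6 a + a^8/40320.

Lemma cos_approx_3 a : cos_approx a 3 = cos_taylor6 a.
Proof.
  unfold cos_approx, cos_term, cos_taylor6; cbn [sum_f_R0 Nat.mul Nat.add].
  rewrite !fact_simpl, !mult_INR; simpl INR; field.
Qed.

Lemma cos_approx_4 a : cos_approx a 4 = cos_taylor8 a.
Proof.
  unfold cos_approx, cos_term, cos_taylor8, cos_taylor6; cbn [sum_f_R0 Nat.mul Nat.add].
  rewrite !fact_simpl, !mult_INR; simpl INR; field.
Qed.

Lemma cos_taylor6_le a : -2 <= a <= 2 -> cos_taylor6 a <= cos a.
Proof. intros; rewrite <- cos_approx_3; apply (pre_cos_bound a 1); lra. Qed.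

Lemma cos_le_taylor8 a : -2 <= a <= 2 -> cos a <= cos_taylor8 a.
Proof. intros; rewrite <- cos_approx_4; apply (pre_cos_bound a 1); lra. Qed.

Lemma PI_bounds : 3.12 < PI < 3.15.
Proof.
  pose proof PI2_3_2.
  split.
  - destruct (Rlt_le_dec (1.56) (PI/2)) as [h|h]; [lra|].
    assert (cos (1.56) <= 0) by (apply cos_le_0; lra).
    pose proof (cos_taylor6_le (1.56)); unfold cos_taylor6 in *; lra.
  - destruct (Rlt_le_dec (PI/2) (1.575)) as [h|h]; [lra|].
    assert (0 <= cos (1.575)) by (apply cos_ge_0; lra).
    pose proof (cos_le_taylor8 (1.575)); unfold cos_taylor8, cos_taylor6 in *; lra.
Qed.

Lemma acos_between lo hi x : 0 <= lo <= hi -> hi <= PI -> cos hi < x < cos lo ->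
  lo < acos x < hi.
Proof.
  intros hlo hhi hx.
  pose proof (COS_bound lo); pose proof (COS_bound hi); pose proof (acos_bound x).
  assert (hcx : cos (acos x) = x) by (apply cos_acos; lra).
  split; apply cos_decreasing_0; lra.
Qed.

Lemma acos_taylor_bounds lo hi x : 0 <= lo <= hi -> hi <= 2 ->
  cos_taylor8 hi < x < cos_taylor6 lo -> lo < acos x < hi.
Proof.
  intros hlo hhi hx; pose proof PI_bounds.
  pose proof (cos_taylor6_le lo); pose proof (cos_le_taylor8 hi).
  apply acos_between; lra.
Qed.

(* Outside [-1, 1] the function acos takes the junk values 0 and PI. *)
Lemma acos_eq_cos x s : acos x = s -> 0 < s < PI -> x = cos s.
Proof.
  intros hx hs.
  destruct (Rlt_le_dec (-1) x); [destruct (Rlt_le_dec x 1)|].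
  - rewrite <- hx, cos_acos; lra.
  - unfold acos in hx; destruct (Rle_dec x (-1)), (Rle_dec 1 x); lra.
  - unfold acos in hx; destruct (Rle_dec x (-1)); lra.
Qed.

Lemma mul_sqrt_lt r n M : 0 < n -> 0 < M -> (r <= 0 \/ r^2 * M < n^2) ->
  r * sqrt M < n.
Proof.
  intros hn hM hr.
  pose proof (sqrt_lt_R0 M hM) as hs; pose proof (sqrt_sqrt M (Rlt_le _ _ hM)) as hss.
  destruct (Rle_lt_dec r 0) as [hr0|hr0]; [nra|].
  destruct hr as [|hr]; [lra|].
  apply Rsqr_incrst_0; [|nra|lra]; unfold Rsqr.
  replace (r * sqrt M * (r * sqrt M)) with (r^2 * (sqrt M * sqrt M)) by ring.
  rewrite hss; lra.
Qed.

Lemma lt_mul_sqrt r n M : 0 < n -> 0 < M -> 0 < r -> n^2 < r^2 * M ->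
  n < r * sqrt M.
Proof.
  intros hn hM hr h.
  pose proof (sqrt_lt_R0 M hM) as hs; pose proof (sqrt_sqrt M (Rlt_le _ _ hM)) as hss.
  apply Rsqr_incrst_0; [|lra|nra]; unfold Rsqr.
  replace (r * sqrt M * (r * sqrt M)) with (r^2 * (sqrt M * sqrt M)) by ring.
  rewrite hss; lra.
Qed.

Definition cosine_rule_angle (c a b : R) : R :=
  acos ((c - a * b) / (sqrt (1 - a^2) * sqrt (1 - b^2))).

Lemma cosine_rule_angle_comm c a b :
  cosine_rule_angle c a b = cosine_rule_angle c b a.
Proof. unfold cosine_rule_angle; rewrite (Rmult_comm a), (Rmult_comm (sqrt _)); reflexivity. Qed.

Lemma cosine_rule_angle_bounds c a b lo hi :
  a^2 < 1 -> b^2 < 1 -> 0 <= lo <= hi -> hi <= 2 -> 0 < c - a * b ->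
  0 < cos_taylor6 lo ->
  (c - a * b)^2 < cos_taylor6 lo ^ 2 * ((1 - a^2) * (1 - b^2)) ->
  (cos_taylor8 hi <= 0 \/ cos_taylor8 hi ^ 2 * ((1 - a^2) * (1 - b^2)) < (c - a * b)^2) ->
  lo < cosine_rule_angle c a b < hi.
Proof.
  intros ha hb hlo hhi hn hpos hup hdown.
  unfold cosine_rule_angle; rewrite <- sqrt_mult by lra.
  assert (hM : 0 < (1 - a^2) * (1 - b^2)) by nra.
  pose proof (sqrt_lt_R0 _ hM).
  apply acos_taylor_bounds; try lra; split.
  - apply Rmult_lt_reg_r with (sqrt ((1 - a^2) * (1 - b^2))); [lra|].
    unfold Rdiv; rewrite Rmult_assoc, Rinv_l, Rmult_1_r by lra.
    apply mul_sqrt_lt; lra.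
  - apply Rmult_lt_reg_r with (sqrt ((1 - a^2) * (1 - b^2))); [lra|].
    unfold Rdiv; rewrite Rmult_assoc, Rinv_l, Rmult_1_r by lra.
    apply lt_mul_sqrt; lra.
Qed.

Lemma base_angle_bounds_3 :
  0.50 < cosine_rule_angle (1/2) (1/2) (-7/18) < 0.53.
Proof. apply cosine_rule_angle_bounds; unfold cos_taylor8, cos_taylor6; lra. Qed.

Lemma base_angle_bounds_4 :
  1.17 < cosine_rule_angle (1/2) (1/2) (11/27) < 1.20.
Proof. apply cosine_rule_angle_bounds; unfold cos_taylor8, cos_taylor6; lra. Qed.

Lemma middle_angle_bounds_33 :
  1.13 < cosine_rule_angle (1/2) (-7/18) (-7/18) < 1.16.
Proof. apply cosine_rule_angle_bounds; unfold cos_taylor8, cos_taylor6; lra. Qed.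

Lemma middle_angle_bounds_34 :
  0.66 < cosine_rule_angle (1/2) (-7/18) (11/27) < 0.69.
Proof. apply cosine_rule_angle_bounds; unfold cos_taylor8, cos_taylor6; lra. Qed.

Lemma middle_angle_bounds_44 :
  1.14 < cosine_rule_angle (1/2) (11/27) (11/27) < 1.17.
Proof. apply cosine_rule_angle_bounds; unfold cos_taylor8, cos_taylor6; lra. Qed.

Lemma acos_one_third_bounds : 1.22 < acos (1/3) < 1.24.
Proof. apply acos_taylor_bounds; unfold cos_taylor8, cos_taylor6; lra. Qed.

Lemma cos_special_angle k : cos (special_angle k) = cos (INR k * acos (1/3)).
Proof. unfold special_angle; rewrite cos_minus, cos_2PI, sin_2PI; ring. Qed.

Lemma cos_special_angle_3 : cos (special_angle 3) = -23/27.
Proof.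
  rewrite cos_special_angle; replace (INR 3 * acos (1/3)) with (2 * acos (1/3) + acos (1/3))
    by (simpl; ring).
  pose proof (sin2_cos2 (acos (1/3))) as hsc; unfold Rsqr in hsc.
  rewrite cos_plus, cos_2a_cos, sin_2a; rewrite cos_acos in * by lra; lra.
Qed.

Lemma cos_special_angle_4 : cos (special_angle 4) = 17/81.
Proof.
  rewrite cos_special_angle; replace (INR 4 * acos (1/3)) with (2 * (2 * acos (1/3)))
    by (simpl; ring).
  rewrite 2!cos_2a_cos, cos_acos by lra; lra.
Qed.

Lemma special_angle_3_4_bounds :
  0 < special_angle 3 < PI /\ 0 < special_angle 4 < PI.
Proof.
  pose proof PI_bounds; pose proof acos_one_third_bounds.
  unfold special_angle; simpl INR; lra.
Qed.

Lemma dot_comm a b : dot a b = dot b a.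
Proof. unfold dot; ring. Qed.

Lemma dot_tangent_at v a b : on_sphere v ->
  dot (tangent_at v a) (tangent_at v b) = dot a b - dot a v * dot b v.
Proof.
  unfold on_sphere; intro hv.
  transitivity (dot a b - 2 * dot a v * dot b v + dot a v * dot b v * dot v v).
  - destruct a, b, v; unfold tangent_at, vsub, vadd, vscale, dot; simpl; ring.
  - rewrite hv; ring.
Qed.

Lemma sangle_cosine_rule a v b : on_sphere a -> on_sphere v -> on_sphere b ->
  sangle a v b = cosine_rule_angle (dot a b) (dot a v) (dot b v).
Proof.
  intros ha hv hb; unfold sangle, vnorm, cosine_rule_angle.
  rewrite !dot_tangent_at by exact hv.
  unfold on_sphere in ha, hb; rewrite ha, hb; simpl; rewrite !Rmult_1_r; reflexivity.
Qed.

Lemma dot_of_sdist_PI3 a b : sdist a b = PI / 3 -> dot a b = 1/2.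
Proof.
  intro h; rewrite (acos_eq_cos _ _ h), cos_PI3; [reflexivity|].
  pose proof PI_RGT_0; lra.
Qed.

Lemma base_cos_of_special_apex c :
  cosine_rule_angle c (1/2) (1/2) = special_angle 3 \/
  cosine_rule_angle c (1/2) (1/2) = special_angle 4 ->
  c = -7/18 \/ c = 11/27.
Proof.
  pose proof special_angle_3_4_bounds.
  unfold cosine_rule_angle; rewrite <- sqrt_mult, sqrt_square by lra.
  intros [h|h]; apply acos_eq_cos in h; try lra.
  - rewrite cos_special_angle_3 in h; left; lra.
  - rewrite cos_special_angle_4 in h; right; lra.
Qed.

Lemma INR_1_to_4 k : (1 <= k <= 4)%nat ->
  INR k = 1 \/ INR k = 2 \/ INR k = 3 \/ INR k = 4.
Proof. intro; destruct k as [|[|[|[|[|k]]]]]; simpl; lia || lra. Qed.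

Lemma angle_sum_not_special c13 c14 k :
  (c13 = -7/18 \/ c13 = 11/27) -> (c14 = -7/18 \/ c14 = 11/27) -> (1 <= k <= 4)%nat ->
  cosine_rule_angle (1/2) (1/2) c13 + cosine_rule_angle (1/2) (1/2) c14 +
  cosine_rule_angle (1/2) c13 c14 <> special_angle k.
Proof.
  intros h13 h14 hk.
  pose proof PI_bounds; pose proof acos_one_third_bounds.
  pose proof base_angle_bounds_3; pose proof base_angle_bounds_4.
  pose proof middle_angle_bounds_33; pose proof middle_angle_bounds_44.
  pose proof middle_angle_bounds_34.
  pose proof (cosine_rule_angle_comm (1/2) (11/27) (-7/18)).
  unfold special_angle.
  destruct h13 as [-> | ->], h14 as [-> | ->], (INR_1_to_4 k hk) as [e|[e|[e|e]]];
    rewrite e; lra.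
Qed.

Theorem lemma5 (p1 p2 p3 p4 p5 : pt) :
  on_sphere p1 -> on_sphere p2 -> on_sphere p3 -> on_sphere p4 -> on_sphere p5 ->
  sdist p1 p2 = PI / 3 -> sdist p2 p3 = PI / 3 -> sdist p3 p4 = PI / 3 ->
  sdist p4 p5 = PI / 3 -> sdist p5 p1 = PI / 3 ->
  simple_pentagon p1 p2 p3 p4 p5 ->
  proper_diagonals p1 p2 p3 p4 p5 ->
  sdist p1 p3 > PI / 3 -> sdist p1 p4 > PI / 3 ->
  (sangle p1 p2 p3 = special_angle 3 \/ sangle p1 p2 p3 = special_angle 4) ->
  (sangle p1 p5 p4 = special_angle 3 \/ sangle p1 p5 p4 = special_angle 4) ->
  forall k : nat, (1 <= k <= 4)%nat ->
    sangle p2 p1 p3 + sangle p4 p1 p5 + sangle p3 p1 p4 <> special_angle k.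
Proof.
  intros h1 h2 h3 h4 h5 d12 d23 d34 d45 d51 _ _ _ _ ha hb k hk.
  apply dot_of_sdist_PI3 in d12, d23, d34, d45, d51.
  rewrite !sangle_cosine_rule in * by assumption.
  rewrite (dot_comm p2 p1), (dot_comm p3 p2), (dot_comm p3 p1), (dot_comm p4 p1),
    (dot_comm p1 p5) in *.
  rewrite d12, d23, d34, d45, d51 in *.
  rewrite (cosine_rule_angle_comm _ (dot p1 p4)).
  apply angle_sum_not_special; auto using base_cos_of_special_apex.
Qed.
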